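(* Consider the planar system $$\frac{dN}{dt}=rN\left(1-\frac{N}{K}-\frac{h}{w+N}\right)-\frac{aNP}{b+N^2},\qquad \frac{dP}{dt}=\frac{cNP}{b+N^2}-\delta P,$$ where $r,K,h,w,a,b,c,\delta$ are positive constants with $w<K$. Let $D=c^2-4b\delta^2$, $N_4=\frac{c+\sqrt{D}}{2\delta}$, $N_5=\frac{c-\sqrt{D}}{2\delta}$, $N_6=\frac{c}{2\delta}$, and $$P(N)=\frac{r(b+N^2)\left[(K-w)N-K(h-w)-N^2\right]}{Ka(w+N)},$$ and set $E_i=(N_i,P(N_i))$, $i=4,5,6$. Suppose $P(N_4)>0$, $P(N_5)>0$ and $P(N_6)>0$ (for whichever of these are defined). For $i=4,5$ let $$T_i=\frac{hrN_i}{(w+N_i)^2}+\frac{2aP(N_i)N_i^2}{(b+N_i^2)^2}-\frac{rN_i}{K}$$ (the trace of the Jacobian of the system at $E_i$). (i) If $b=\left(\frac{c}{2\delta}\right)^2$, then the coexistence equilibrium point $E_6$ is non-hyperbolic. (ii) If $b<\left(\frac{c}{2\delta}\right)^2$, then the coexistence equilibrium point $E_4$ is unstable; moreover, if $T_4<0$ then $E_4$ is a saddle, and if $T_5<0$ then $E_5$ is locally asymptotically stable.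
   Context: $N(t)$ is the prey density and $P(t)$ the predator density. A coexistence equilibrium is an equilibrium with both coordinates positive. An equilibrium is non-hyperbolic if the Jacobian matrix of the system at it has an eigenvalue with zero real part. *)

From Stdlib Require Import Reals.
From Coquelicot Require Import Coquelicot.
Open Scope R_scope.

Definition fN (r K h w a b : R) (N P : R) : R :=
  r * N * (1 - N / K - h / (w + N)) - a * N * P / (b + N ^ 2).

Definition fP (b c delta : R) (N P : R) : R :=
  c * N * P / (b + N ^ 2) - delta * P.

Definition coexistence_equilibrium (r K h w a b c delta N P : R) : Prop :=
  0 < N /\ 0 < P /\ fN r K h w a b N P = 0 /\ fP b c delta N P = 0.

Definition J11 r K h w a b (N P : R) : R := Derive (fun x => fN r K h w a b x P) N.
Definition J12 r K h w a b (N P : R) : R := Derive (fun y => fN r K h w a b N y) P.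
Definition J21 b c delta (N P : R) : R := Derive (fun x => fP b c delta x P) N.
Definition J22 b c delta (N P : R) : R := Derive (fun y => fP b c delta N y) P.

Definition eigenvalue2 (m11 m12 m21 m22 : R) (lam : C) : Prop :=
  Cminus (Cmult (Cminus (RtoC m11) lam) (Cminus (RtoC m22) lam))
         (RtoC (m12 * m21)) = RtoC 0.

Definition jac_eigenvalue (r K h w a b c delta N P : R) (lam : C) : Prop :=
  eigenvalue2 (J11 r K h w a b N P) (J12 r K h w a b N P)
              (J21 b c delta N P) (J22 b c delta N P) lam.

Definition non_hyperbolic r K h w a b c delta N P : Prop :=
  exists lam, jac_eigenvalue r K h w a b c delta N P lam /\ Re lam = 0.

Definition unstable_eq r K h w a b c delta N P : Prop :=
  exists lam, jac_eigenvalue r K h w a b c delta N P lam /\ 0 < Re lam.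

Definition saddle_eq r K h w a b c delta N P : Prop :=
  exists l1 l2 : R, jac_eigenvalue r K h w a b c delta N P (RtoC l1) /\
                    jac_eigenvalue r K h w a b c delta N P (RtoC l2) /\
                    l1 < 0 < l2.

Definition las_eq r K h w a b c delta N P : Prop :=
  forall lam, jac_eigenvalue r K h w a b c delta N P lam -> Re lam < 0.

(* The curve P(N) (prey nullcline). *)
Definition Pcurve (r K h w a b : R) (N : R) : R :=
  r * (b + N ^ 2) * ((K - w) * N - K * (h - w) - N ^ 2) / (K * a * (w + N)).

Definition Dd (b c delta : R) : R := c ^ 2 - 4 * b * delta ^ 2.
Definition N4 (b c delta : R) : R := (c + sqrt (Dd b c delta)) / (2 * delta).
Definition N5 (b c delta : R) : R := (c - sqrt (Dd b c delta)) / (2 * delta).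
Definition N6 (c delta : R) : R := c / (2 * delta).

Definition Ttr (r K h w a b : R) (Ni : R) : R :=
  h * r * Ni / (w + Ni) ^ 2
  + 2 * a * Pcurve r K h w a b Ni * Ni ^ 2 / (b + Ni ^ 2) ^ 2
  - r * Ni / K.

From Stdlib Require Import Reals Lra Psatz.
From Coquelicot Require Import Coquelicot.
Open Scope R_scope.

(* At an equilibrium lying on both nullclines the predator equation forces
   cN/(b+N^2) = delta, so the Jacobian is [[T, -aN/(b+N^2)], [cP(b-N^2)/(b+N^2)^2, 0]]
   with T the trace Ttr and determinant of the sign of b - N^2.  The predator
   nullcline delta N^2 - cN + delta b = 0 has the roots N5 < N4 with N4 N5 = b,
   so N5^2 < b < N4^2, while N6^2 = b in the tangential case.  Hence E6 has the
   eigenvalue 0, E4 has negative determinant (a saddle whatever the sign of T4,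
   in particular unstable), and E5 has positive determinant, so it is stable as
   soon as its trace T5 is negative. *)

Lemma eigenvalue2_char m11 m12 m21 m22 x y :
  eigenvalue2 m11 m12 m21 m22 (x, y) <->
  x ^ 2 - y ^ 2 - (m11 + m22) * x + (m11 * m22 - m12 * m21) = 0 /\
  (2 * x - (m11 + m22)) * y = 0.
Proof.
  unfold eigenvalue2, Cminus, Cmult, Cplus, Copp, RtoC; simpl.
  split.
  - intros H; injection H as Hre Him; split; nra.
  - intros [Hre Him]; f_equal; nra.
Qed.

Lemma eigenvalue2_0 m11 m12 m21 m22 :
  m11 * m22 - m12 * m21 = 0 -> eigenvalue2 m11 m12 m21 m22 (RtoC 0).
Proof. intros Hdet; apply eigenvalue2_char; split; lra. Qed.

Lemma eigenvalue2_det_neg m11 m12 m21 m22 :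
  m11 * m22 - m12 * m21 < 0 ->
  exists l1 l2 : R, eigenvalue2 m11 m12 m21 m22 (RtoC l1) /\
                    eigenvalue2 m11 m12 m21 m22 (RtoC l2) /\ l1 < 0 < l2.
Proof.
  intros Hdet.
  set (t := m11 + m22); set (d := m11 * m22 - m12 * m21) in Hdet.
  set (s := sqrt (t ^ 2 - 4 * d)).
  assert (Hs2 : s * s = t ^ 2 - 4 * d) by (apply sqrt_sqrt; nra).
  assert (Hs0 : 0 <= s) by apply sqrt_pos.
  assert (Hst : t < s /\ - t < s) by (split; nra).
  exists ((t - s) / 2), ((t + s) / 2).
  unfold RtoC; rewrite !eigenvalue2_char; fold t d.
  repeat split; [nra | ring | nra | ring | lra | lra].
Qed.

Lemma eigenvalue2_Re_neg m11 m12 m21 m22 lam :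
  0 < m11 * m22 - m12 * m21 -> m11 + m22 < 0 ->
  eigenvalue2 m11 m12 m21 m22 lam -> Re lam < 0.
Proof.
  destruct lam as [x y]; rewrite eigenvalue2_char; simpl.
  intros Hdet Htr [Hre Him].
  destruct (Req_dec y 0) as [-> | Hy].
  - nra.
  - apply Rmult_integral in Him as [Hx | Hy0]; [lra | contradiction].
Qed.

Lemma unstable_of_saddle r K h w a b c delta N P :
  saddle_eq r K h w a b c delta N P -> unstable_eq r K h w a b c delta N P.
Proof. intros (l1 & l2 & _ & Hl2 & _ & Hpos); exists (RtoC l2); split; [exact Hl2 | exact Hpos]. Qed.

Section Jacobian.

Variables r K h w a b c delta : R.
Hypotheses (hK : 0 < K) (hw : 0 < w) (hb : 0 < b).

Lemma J11_eq N P : 0 < N ->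
  J11 r K h w a b N P =
  r * (1 - N / K - h / (w + N)) + r * N * (- 1 / K + h / (w + N) ^ 2)
  - a * P * (b - N ^ 2) / (b + N ^ 2) ^ 2.
Proof.
  intros hN; unfold J11, fN; apply is_derive_unique; auto_derive.
  - repeat split; nra.
  - field; repeat split; nra.
Qed.

Lemma J12_eq N P : J12 r K h w a b N P = - a * N / (b + N ^ 2).
Proof.
  unfold J12, fN; apply is_derive_unique; auto_derive.
  - nra.
  - field; nra.
Qed.

Lemma J21_eq N P : J21 b c delta N P = c * P * (b - N ^ 2) / (b + N ^ 2) ^ 2.
Proof.
  unfold J21, fP; apply is_derive_unique; auto_derive.
  - repeat split; nra.
  - field; nra.
Qed.

Lemma J22_eq N P : J22 b c delta N P = c * N / (b + N ^ 2) - delta.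
Proof.
  unfold J22, fP; apply is_derive_unique; auto_derive.
  - nra.
  - field; nra.
Qed.

End Jacobian.

Section Nullclines.

Variables r K h w a b c delta N : R.
Hypotheses (hK : 0 < K) (hw : 0 < w) (ha : 0 < a) (hb : 0 < b) (hc : 0 < c) (hN : 0 < N).
Hypothesis hnull : delta * N ^ 2 - c * N + delta * b = 0.

Local Notation PN := (Pcurve r K h w a b N).

Lemma prey_rate_on_Pcurve : r * (1 - N / K - h / (w + N)) = a * PN / (b + N ^ 2).
Proof. unfold Pcurve; field; repeat split; nra. Qed.

Lemma predator_rate_on_nullcline : c * N / (b + N ^ 2) = delta.
Proof. field_simplify_eq; nra. Qed.

Lemma coexistence_on_nullclines :
  0 < PN -> coexistence_equilibrium r K h w a b c delta N PN.
Proof.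
  intros hP; unfold coexistence_equilibrium, fN, fP; repeat split; try assumption.
  - replace (a * N * PN / (b + N ^ 2)) with (N * (a * PN / (b + N ^ 2))) by (field; nra).
    rewrite <- prey_rate_on_Pcurve; ring.
  - replace (c * N * PN / (b + N ^ 2)) with (PN * (c * N / (b + N ^ 2))) by (field; nra).
    rewrite predator_rate_on_nullcline; ring.
Qed.

Lemma J11_on_nullclines : J11 r K h w a b N PN = Ttr r K h w a b N.
Proof.
  rewrite J11_eq, prey_rate_on_Pcurve by assumption; unfold Ttr; field; nra.
Qed.

Lemma J22_on_nullclines : J22 b c delta N PN = 0.
Proof. rewrite J22_eq, predator_rate_on_nullcline by assumption; ring. Qed.

Lemma jacobian_det_on_nullclines :
  J11 r K h w a b N PN * J22 b c delta N PN - J12 r K h w a b N PN * J21 b c delta N PN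
  = a * c * N * PN / (b + N ^ 2) ^ 3 * (b - N ^ 2).
Proof. rewrite J22_on_nullclines, J12_eq, J21_eq by assumption; field; nra. Qed.

Lemma jacobian_det_factor_pos : 0 < PN -> 0 < a * c * N * PN / (b + N ^ 2) ^ 3.
Proof.
  intros hP; apply Rdiv_lt_0_compat; [| apply pow_lt; nra].
  apply Rmult_lt_0_compat; [repeat apply Rmult_lt_0_compat; assumption | exact hP].
Qed.

Lemma non_hyperbolic_on_nullclines :
  N ^ 2 = b -> non_hyperbolic r K h w a b c delta N PN.
Proof.
  intros hsq; exists (RtoC 0); split; [|reflexivity].
  apply eigenvalue2_0; rewrite jacobian_det_on_nullclines, hsq; ring.
Qed.

Lemma saddle_on_nullclines :
  0 < PN -> b < N ^ 2 -> saddle_eq r K h w a b c delta N PN.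
Proof.
  intros hP hsq; apply eigenvalue2_det_neg; rewrite jacobian_det_on_nullclines.
  apply Rmult_pos_neg; [apply jacobian_det_factor_pos, hP | lra].
Qed.

Lemma las_on_nullclines :
  0 < PN -> N ^ 2 < b -> Ttr r K h w a b N < 0 -> las_eq r K h w a b c delta N PN.
Proof.
  intros hP hsq hT lam; apply eigenvalue2_Re_neg.
  - rewrite jacobian_det_on_nullclines.
    apply Rmult_lt_0_compat; [apply jacobian_det_factor_pos, hP | lra].
  - rewrite J11_on_nullclines, J22_on_nullclines; lra.
Qed.

End Nullclines.

Section PredatorNullcline.

Variables b c delta : R.
Hypotheses (hb : 0 < b) (hc : 0 < c) (hd : 0 < delta).

Lemma Dd_pos : b < (c / (2 * delta)) ^ 2 -> 0 < Dd b c delta.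
Proof.
  intros hlt; unfold Dd.
  replace ((c / (2 * delta)) ^ 2) with (c ^ 2 / (4 * delta ^ 2)) in hlt by (field; lra).
  apply Rmult_lt_compat_r with (r := 4 * delta ^ 2) in hlt; [|nra].
  field_simplify in hlt; lra.
Qed.

Lemma nullcline_root s : s * s = Dd b c delta ->
  delta * ((c + s) / (2 * delta)) ^ 2 - c * ((c + s) / (2 * delta)) + delta * b = 0.
Proof. unfold Dd; intros hs; field_simplify_eq; [nra | lra]. Qed.

Lemma N4_nullcline : 0 <= Dd b c delta ->
  delta * N4 b c delta ^ 2 - c * N4 b c delta + delta * b = 0.
Proof. intros hD; apply nullcline_root, sqrt_sqrt, hD. Qed.

Lemma N5_nullcline : 0 <= Dd b c delta ->
  delta * N5 b c delta ^ 2 - c * N5 b c delta + delta * b = 0.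
Proof.
  intros hD; unfold N5; replace (c - sqrt (Dd b c delta)) with (c + - sqrt (Dd b c delta)) by ring.
  apply nullcline_root; rewrite <- (sqrt_sqrt _ hD) at 3; ring.
Qed.

Lemma N6_nullcline : b = (c / (2 * delta)) ^ 2 ->
  delta * N6 c delta ^ 2 - c * N6 c delta + delta * b = 0.
Proof. intros ->; unfold N6; field; lra. Qed.

Lemma N4_mul_N5 : 0 <= Dd b c delta -> N4 b c delta * N5 b c delta = b.
Proof.
  intros hD; unfold N4, N5.
  replace ((c + sqrt (Dd b c delta)) / (2 * delta) * ((c - sqrt (Dd b c delta)) / (2 * delta)))
    with ((c ^ 2 - sqrt (Dd b c delta) * sqrt (Dd b c delta)) / (4 * delta ^ 2)) by (field; lra).
  rewrite sqrt_sqrt by exact hD; unfold Dd; field; lra.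
Qed.

Lemma N5_pos : 0 <= Dd b c delta -> 0 < N5 b c delta.
Proof.
  intros hD; unfold N5; apply Rdiv_lt_0_compat; [|lra].
  pose proof (sqrt_sqrt _ hD) as hs; pose proof (sqrt_pos (Dd b c delta)).
  assert (0 < b * delta ^ 2) by (apply Rmult_lt_0_compat; [|apply pow_lt]; lra).
  unfold Dd in *; nra.
Qed.

Lemma N5_lt_N4 : 0 < Dd b c delta -> N5 b c delta < N4 b c delta.
Proof.
  intros hD; unfold N4, N5; pose proof (sqrt_lt_R0 _ hD).
  apply Rmult_lt_compat_r; [apply Rinv_0_lt_compat |]; lra.
Qed.

End PredatorNullcline.

Theorem theorem7 (r K h w a b c delta : R)
  (hr : 0 < r) (hK : 0 < K) (hh : 0 < h) (hw : 0 < w) (ha : 0 < a)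
  (hb : 0 < b) (hc : 0 < c) (hd : 0 < delta) (hwK : w < K)
  (hP4 : 0 < Pcurve r K h w a b (N4 b c delta))
  (hP5 : 0 < Pcurve r K h w a b (N5 b c delta))
  (hP6 : 0 < Pcurve r K h w a b (N6 c delta)) :
  (b = (c / (2 * delta)) ^ 2 ->
     let E6N := N6 c delta in let E6P := Pcurve r K h w a b E6N in
     coexistence_equilibrium r K h w a b c delta E6N E6P /\
     non_hyperbolic r K h w a b c delta E6N E6P)
  /\
  (b < (c / (2 * delta)) ^ 2 ->
     let E4N := N4 b c delta in let E4P := Pcurve r K h w a b E4N in
     let E5N := N5 b c delta in let E5P := Pcurve r K h w a b E5N in
     coexistence_equilibrium r K h w a b c delta E4N E4P /\
     unstable_eq r K h w a b c delta E4N E4P /\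
     (Ttr r K h w a b E4N < 0 -> saddle_eq r K h w a b c delta E4N E4P) /\
     (Ttr r K h w a b E5N < 0 ->
        coexistence_equilibrium r K h w a b c delta E5N E5P /\
        las_eq r K h w a b c delta E5N E5P)).
Proof.
  split.
  - intros hsq E6N E6P.
    assert (hN6 : 0 < N6 c delta) by (apply Rdiv_lt_0_compat; lra).
    assert (hnull6 := N6_nullcline b c delta hb hd hsq).
    split.
    + apply coexistence_on_nullclines; assumption.
    + apply non_hyperbolic_on_nullclines; auto.
  - intros hlt E4N E4P E5N E5P.
    assert (hD := Dd_pos b c delta hd hlt).
    assert (hN5 := N5_pos b c delta hb hc hd (Rlt_le _ _ hD)).
    assert (hN5N4 := N5_lt_N4 b c delta hd hD).
    assert (hprod := N4_mul_N5 b c delta hd (Rlt_le _ _ hD)).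
    assert (hnull4 := N4_nullcline b c delta hd (Rlt_le _ _ hD)).
    assert (hnull5 := N5_nullcline b c delta hd (Rlt_le _ _ hD)).
    assert (hN4 : 0 < E4N) by exact (Rlt_trans _ _ _ hN5 hN5N4).
    assert (hsq4 : b < E4N ^ 2) by (rewrite <- hprod; unfold E4N; nra).
    assert (hsq5 : E5N ^ 2 < b) by (rewrite <- hprod; unfold E5N; nra).
    assert (hsaddle : saddle_eq r K h w a b c delta E4N E4P)
      by (apply saddle_on_nullclines; assumption).
    split; [|split; [|split]].
    + apply coexistence_on_nullclines; assumption.
    + apply unstable_of_saddle, hsaddle.
    + intros _; exact hsaddle.
    + intros hT; split.
      * apply coexistence_on_nullclines; assumption.
      * apply las_on_nullclines; assumption.
Qed.
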